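(* Let $k\ge1$ and $\delta\notin I_k=\{-\frac{p}{2(n+1)}:p\in\{k-1,\dots,2k-2\}\}$. Define $s_{k-1}:R^{k-1}\to R^k$ by $s_{k-1}(S)=-\sum_{l=1}^kb_{k,l}\,X^l\big(i(\alpha)^{l-1}(S)\big)$, where $b_{k,l}=\big(\prod_{j=1}^l(-r(j,k-j))\big)^{-1}$. Then $i(\alpha)\circ s_{k-1}=\mathrm{Id}$ on $R^{k-1}$.
   Context: Let $n\ge1$, $M=\mathbb{R}^{2n+1}$ with coordinates $(q^1,\dots,q^n,p^1,\dots,p^n,t)$. For $\mu\in\mathbb{R}$, $\mathcal{S}^k_\mu$ denotes the space of smooth functions $S(x,\xi)$ on $M\times\mathbb{R}^{2n+1}$ homogeneous polynomial of degree $k$ in $\xi=(\xi_{q^1},\dots,\xi_{q^n},\xi_{p^1},\dots,\xi_{p^n},\xi_t)$. Fix $\delta\in\mathbb{R}$ and set $R^k=\mathcal{S}^k_{\delta+\frac{k}{n+1}}$ for $k\ge0$, $R^{j}=0$ for $j<0$. Let $E_s=\sum_i(p^i\partial_{p^i}+q^i\partial_{q^i})$, $\langle E_s,\xi\rangle=\sum_i(p^i\xi_{p^i}+q^i\xi_{q^i})$, $D(S)=\sum_i(\xi_{q^i}\partial_{p^i}S-\xi_{p^i}\partial_{q^i}S)+\xi_tE_s(S)-\langle E_s,\xi\rangle\partial_tS$. Operators: $i(\alpha):R^k\to R^{k-1}$, $i(\alpha)(S)=\frac12\big(\sum_i(p^i\partial_{\xi_{q^i}}S-q^i\partial_{\xi_{p^i}}S)-\partial_{\xi_t}S\big)$;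 $X:R^k\to R^{k+1}$, $X(S)=D(S)+(2(n+1)\delta+k)\xi_tS$. Set $r(l,k)=-\frac{l}{2}\big(2(n+1)\delta+2k+l-1\big)$ (for $\delta\notin I_k$ the numbers $r(j,k-j)$, $1\le j\le k$, are nonzero). *)

From HB Require Import structures.
From mathcomp Require Import all_boot all_order all_algebra.
From mathcomp Require Import all_classical all_reals all_analysis.
Set Implicit Arguments. Unset Strict Implicit. Unset Printing Implicit Defensive.
Import Order.TTheory GRing.Theory Num.Theory.
Import numFieldNormedType.Exports.
Local Open Scope ring_scope.

(* Points of M = R^(2n+1) and covectors xi are row vectors indexed by
   'I_(n+n+1): indices 0..n-1 are q^i, n..2n-1 are p^i, 2n is t. *)
Definition V (R : realType) (n : nat) := 'rV[R]_(n + n + 1).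

Definition qidx (n : nat) (i : 'I_n) : 'I_(n + n + 1) := lshift 1 (lshift n i).
Definition pidx (n : nat) (i : 'I_n) : 'I_(n + n + 1) := lshift 1 (rshift n i).
Definition tidx (n : nat) : 'I_(n + n + 1) := rshift (n + n) (ord0 : 'I_1).

Definition evec (R : realType) (n : nat) (j : 'I_(n + n + 1)) : V R n :=
  delta_mx 0 j.

Fixpoint iterD (R : realType) (n : nat) (vs : seq (V R n)) (f : V R n -> R)
  : V R n -> R :=
  match vs with
  | [::] => f
  | v :: vs' => fun x => 'D_v (iterD vs' f) x
  end.

Definition smooth (R : realType) (n : nat) (f : V R n -> R) : Prop :=
  forall (vs : seq (V R n)) (x : V R n), differentiable (iterD vs f) x.

Definition symb (R : realType) (n : nat) := V R n -> V R n -> R.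

(* S in S^k_mu (the weight mu does not affect the underlying function space):
   S is a homogeneous polynomial of degree k in xi with smooth coefficients in x *)
Definition is_symbol (R : realType) (n k : nat) (S : symb R n) : Prop :=
  exists c : {ffun 'I_(n + n + 1) -> 'I_k.+1} -> V R n -> R,
    (forall a, smooth (c a)) /\
    forall x xi : V R n,
      S x xi = \sum_(a : {ffun 'I_(n + n + 1) -> 'I_k.+1} | (\sum_i (a i : nat) == k)%N)
                 c a x * \prod_i (xi 0 i) ^+ (a i).

Definition dx (R : realType) (n : nat) (j : 'I_(n + n + 1)) (S : symb R n)
  : symb R n := fun x xi => 'D_(@evec R n j) (fun y => S y xi) x.
Definition dxi (R : realType) (n : nat) (j : 'I_(n + n + 1)) (S : symb R n)
  : symb R n := fun x xi => 'D_(@evec R n j) (S x) xi.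

Definition EsS (R : realType) (n : nat) (S : symb R n) : symb R n :=
  fun x xi => \sum_(i < n) (x 0 (pidx i) * dx (pidx i) S x xi
                            + x 0 (qidx i) * dx (qidx i) S x xi).

Definition Esxi (R : realType) (n : nat) (x xi : V R n) : R :=
  \sum_(i < n) (x 0 (pidx i) * xi 0 (pidx i) + x 0 (qidx i) * xi 0 (qidx i)).

Definition Dop (R : realType) (n : nat) (S : symb R n) : symb R n :=
  fun x xi =>
    \sum_(i < n) (xi 0 (qidx i) * dx (pidx i) S x xi
                  - xi 0 (pidx i) * dx (qidx i) S x xi)
    + xi 0 (tidx n) * EsS S x xi
    - Esxi x xi * dx (tidx n) S x xi.

Definition ialpha (R : realType) (n : nat) (S : symb R n) : symb R n :=
  fun x xi =>
    2^-1 * (\sum_(i < n) (x 0 (pidx i) * dxi (qidx i) S x xi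
                          - x 0 (qidx i) * dxi (pidx i) S x xi)
            - dxi (tidx n) S x xi).

(* X : R^m -> R^(m+1) *)
Definition Xop (R : realType) (n : nat) (delta : R) (m : nat) (S : symb R n)
  : symb R n :=
  fun x xi => Dop S x xi
              + (2 * (n + 1)%:R * delta + m%:R) * xi 0 (tidx n) * S x xi.

(* X^l applied to an element of R^m : X_(m+l-1) o ... o X_m *)
Fixpoint Xiter (R : realType) (n : nat) (delta : R) (l m : nat) (S : symb R n)
  : symb R n :=
  match l with
  | 0 => S
  | l'.+1 => Xop delta (m + l') (Xiter delta l' m S)
  end.

Definition rcoef (R : realType) (n : nat) (delta : R) (l k : nat) : R :=
  - (l%:R / 2) * (2 * (n + 1)%:R * delta + 2 * k%:R + l%:R - 1).

Definition bcoef (R : realType) (n : nat) (delta : R) (k l : nat) : R :=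
  (\prod_(1 <= j < l.+1) (- rcoef n delta j (k - j)))^-1.

Definition s_op (R : realType) (n : nat) (delta : R) (k : nat) (S : symb R n)
  : symb R n :=
  fun x xi => - \sum_(1 <= l < k.+1)
      bcoef n delta k l * Xiter delta l (k - l) (iter l.-1 (@ialpha R n) S) x xi.

From Pilot Require Import Defs.
From HB Require Import structures.
From mathcomp Require Import all_boot all_order all_algebra.
From mathcomp Require Import all_classical all_reals all_analysis.
From mathcomp Require Import ring zify.
Set Implicit Arguments. Unset Strict Implicit. Unset Printing Implicit Defensive.
Import Order.TTheory GRing.Theory Num.Theory.
Import numFieldNormedType.Exports.
Local Open Scope ring_scope.

(* Both i(alpha) = sum_j a_j(x) d/dxi_j and D = sum_k b_k(x, xi) d/dx_k are
   first-order operators.  Since i(alpha) kills every b_k, their commutator on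
   a symbol S of degree m in xi only involves the terms (D a_j) d/dxi_j S,
   which Euler's identity for homogeneous functions turns into
     [i(alpha), D] S = - m/2 S - xi_t i(alpha) S.
   Hence i(alpha) X_m = X_(m-1) i(alpha) - ((n+1) delta + m), and by induction
     i(alpha) X^l S = X^l i(alpha) S + r(l, d) X^(l-1) S   for S of degree d.
   Applied to the terms of s_(k-1) S, this makes i(alpha) s_(k-1) S a
   telescoping sum: the coefficients satisfy b_(k,l+1) r(l+1, k-l-1) = - b_(k,l),
   so only the term l = 0, namely S, survives.  The condition on delta says
   exactly that the r(l, k-l) are nonzero. *)

Section BigDerive.
Variables (R : numFieldType) (V : normedModType R).

Lemma derivable_big (I : Type) (r : seq I) (P : pred I) (F : I -> V -> R) x v :
  (forall i, P i -> derivable (F i) x v) ->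
  derivable (fun y => \sum_(i <- r | P i) F i y) x v.
Proof.
move=> dF; elim: r => [|j r IH].
  by under eq_fun do rewrite big_nil; exact: derivable_cst.
under eq_fun do rewrite big_cons.
by case: (boolP (P j)) => Pj //; exact: derivableD (dF _ Pj) IH.
Qed.

Lemma derive_big (I : Type) (r : seq I) (P : pred I) (F : I -> V -> R) x v :
  (forall i, P i -> derivable (F i) x v) ->
  'D_v (fun y => \sum_(i <- r | P i) F i y) x = \sum_(i <- r | P i) 'D_v (F i) x.
Proof.
move=> dF; elim: r => [|i r IH].
  by under eq_fun do rewrite big_nil; rewrite big_nil derive_cst.
under eq_fun do rewrite big_cons; rewrite big_cons.
case: (boolP (P i)) => Pi; last exact: IH.
by rewrite deriveD ?IH //; [exact: dF | exact: derivable_big].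
Qed.

Lemma derive_mul (f g : V -> R) x v : derivable f x v -> derivable g x v ->
  'D_v (fun y => f y * g y) x = f x * 'D_v g x + g x * 'D_v f x.
Proof. exact: deriveM. Qed.

End BigDerive.

Lemma derive_coord {R : realType} {m p : nat} (i : 'I_m) (j : 'I_p) (x v : 'M[R]_(m, p)) :
  'D_v (fun y : 'M[R]_(m, p) => y i j) x = v i j.
Proof.
have := derive_mx (@derivable_id _ _ x v).
by rewrite derive_id => /(congr1 (fun M : 'M[R]_(m, p) => M i j)); rewrite mxE.
Qed.

Lemma derivable_coord {R : realType} {m p : nat} (i : 'I_m) (j : 'I_p) (x v : 'M[R]_(m, p)) :
  derivable (fun y : 'M[R]_(m, p) => y i j) x v.
Proof. exact/diff_derivable/differentiable_coord. Qed.
Arguments derivable_coord {R m p i j x v}.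

Section Symbols.
Variables (R : realType) (n : nat).
Local Notation point := (V R n).
Local Notation N := (n + n + 1)%N.
Local Notation symb := (symb R n).
Local Notation ev j := (@evec R n j).

Lemma symb_ext (S T : symb) : (forall x xi, S x xi = T x xi) -> S = T.
Proof. by move=> e; apply/funext => x; apply/funext => xi; rewrite e. Qed.

Lemma evecE (k j : 'I_N) : ev k 0 j = (k == j)%:R.
Proof. by rewrite /evec mxE eqxx /= eq_sym. Qed.

Lemma sum_evec (F : 'I_N -> R) (l : 'I_N) : \sum_(j < N) F j * ev j 0 l = F l.
Proof.
rewrite (bigD1 l) //= evecE eqxx mulr1 big1 ?addr0 // => j /negbTE jl.
by rewrite evecE jl mulr0.
Qed.

Lemma iterD_cat (vs ws : seq point) (f : point -> R) :
  Defs.iterD vs (Defs.iterD ws f) = Defs.iterD (vs ++ ws) f.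
Proof. by elim: vs => [|v vs IH] //=; rewrite IH. Qed.

Lemma smooth_derive (f : point -> R) v : smooth f -> smooth (fun x => 'D_v f x).
Proof. by move=> sf vs x; rewrite -[fun x => _]/(Defs.iterD [:: v] f) iterD_cat. Qed.

(* Constants and coordinates are smooth too, but listing them as generators
   spares us proving that smooth functions are closed under products. *)
Inductive coeff_fun : (point -> R) -> Prop :=
  | coeff_smooth f : smooth f -> coeff_fun f
  | coeff_cst (c : R) : coeff_fun (fun _ => c)
  | coeff_coord (j : 'I_N) : coeff_fun (fun y => y 0 j)
  | coeff_add f g : coeff_fun f -> coeff_fun g -> coeff_fun (fun y => f y + g y)
  | coeff_mul f g : coeff_fun f -> coeff_fun g -> coeff_fun (fun y => f y * g y).

Lemma coeff_fun_derive f : coeff_fun f ->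
  (forall x v, derivable f x v) /\ (forall v, coeff_fun (fun x => 'D_v f x)).
Proof.
elim=> {f} [f sf|c|j|f g _ [df Df] _ [dg Dg]|f g cf [df Df] cg [dg Dg]].
- split=> [x v|v]; first exact/diff_derivable/(sf [::]).
  exact/coeff_smooth/smooth_derive.
- split=> [x v|v]; first exact: derivable_cst.
  by under eq_fun do rewrite derive_cst; exact: coeff_cst.
- split=> [x v|v]; first exact: derivable_coord.
  by under eq_fun do rewrite derive_coord; exact: coeff_cst.
- split=> [x v|v]; first exact: derivableD.
  under eq_fun => x do rewrite (deriveD (df x v) (dg x v)).
  exact: coeff_add.
- split=> [x v|v]; first exact: derivableM.
  under eq_fun => x do rewrite (deriveM (df x v) (dg x v)).
  exact: coeff_add (coeff_mul cf (Dg v)) (coeff_mul cg (Df v)).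
Qed.

Lemma coeff_derivable f x v : coeff_fun f -> derivable f x v.
Proof. by move=> /coeff_fun_derive[+ _]; apply. Qed.

Lemma coeff_derive f v : coeff_fun f -> coeff_fun (fun x => 'D_v f x).
Proof. by move=> /coeff_fun_derive[_ +]; apply. Qed.

Inductive homog : nat -> symb -> Prop :=
  | homog_coeff f : coeff_fun f -> homog 0 (fun x _ => f x)
  | homog_mulxi m (j : 'I_N) S : homog m S -> homog m.+1 (fun x xi => xi 0 j * S x xi)
  | homog_add m S T : homog m S -> homog m T -> homog m (fun x xi => S x xi + T x xi)
  | homog_mulf m f S : coeff_fun f -> homog m S -> homog m (fun x xi => f x * S x xi).

Lemma homog_ext m S T : homog m S -> (forall x xi, S x xi = T x xi) -> homog m T.
Proof. by move=> hS /symb_ext <-. Qed.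

Lemma homog0 m : homog m (fun _ _ => 0).
Proof.
elim: m => [|m IH]; first exact/homog_coeff/coeff_cst.
by apply: homog_ext (homog_mulxi (tidx n) IH) _ => x xi; rewrite mulr0.
Qed.

Lemma homogZ m (c : R) S : homog m S -> homog m (fun x xi => c * S x xi).
Proof. exact/homog_mulf/coeff_cst. Qed.

Lemma homogB m S T : homog m S -> homog m T -> homog m (fun x xi => S x xi - T x xi).
Proof.
move=> hS hT; apply: homog_add hS (homog_ext (homogZ (-1) hT) _) => x xi.
by rewrite mulN1r.
Qed.

Lemma homog_mulx m (j : 'I_N) S : homog m S -> homog m (fun x xi => x 0 j * S x xi).
Proof. exact/homog_mulf/coeff_coord. Qed.

Lemma homog_sum m (I : Type) (r : seq I) (P : pred I) (F : I -> symb) :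
  (forall i, P i -> homog m (F i)) ->
  homog m (fun x xi => \sum_(i <- r | P i) F i x xi).
Proof.
move=> hF; elim: r => [|i r IH].
  by apply: homog_ext (homog0 m) _ => x xi; rewrite big_nil.
case: (boolP (P i)) => Pi.
  by apply: homog_ext (homog_add (hF _ Pi) IH) _ => x xi; rewrite big_cons Pi.
by apply: homog_ext IH _ => x xi; rewrite big_cons (negbTE Pi).
Qed.

Lemma homog_monomial (r : seq 'I_N) (e : 'I_N -> nat) (f : point -> R) :
  coeff_fun f ->
  homog (\sum_(i <- r) e i)%N (fun x xi => f x * \prod_(i <- r) xi 0 i ^+ e i).
Proof.
move=> cf; elim: r => [|i r IH].
  by rewrite big_nil; apply: homog_ext (homog_coeff cf) _ => x xi; rewrite big_nil mulr1.
rewrite big_cons; apply: (@homog_ext _ (fun x xi => xi 0 i ^+ e i * (f x *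
  \prod_(j <- r) xi 0 j ^+ e j))); last by move=> x xi; rewrite big_cons mulrCA.
elim: (e i) => [|a IHa]; first by apply: homog_ext IH _ => x xi; rewrite expr0 mul1r.
by apply: homog_ext (homog_mulxi i IHa) _ => x xi; rewrite exprS mulrA.
Qed.

Lemma homog_of_symbol m S : is_symbol m S -> homog m S.
Proof.
move=> [c [sc eS]]; apply: homog_ext _ (fun x xi => esym (eS x xi)).
apply: homog_sum => a /eqP ha.
by have := homog_monomial (index_enum _) (fun i => a i : nat) (coeff_smooth (sc a)); rewrite ha.
Qed.

Definition x_derivable (S : symb) := forall x xi v, derivable (fun y => S y xi) x v.
Definition xi_derivable (S : symb) := forall x xi v, derivable (S x) xi v.

Lemma homog_x_derivable m S : homog m S -> x_derivable S.
Proof.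
elim=> {m S} [f cf|m j S _ IH|m S T _ IHS _ IHT|m f S cf _ IH] x xi v.
- exact: coeff_derivable.
- by apply: derivableM; [exact: derivable_cst | exact: IH].
- exact: derivableD (IHS _ _ _) (IHT _ _ _).
- by apply: derivableM; [exact: coeff_derivable | exact: IH].
Qed.

Lemma homog_xi_derivable m S : homog m S -> xi_derivable S.
Proof.
elim=> {m S} [f cf|m j S _ IH|m S T _ IHS _ IHT|m f S cf _ IH] x xi v.
- exact: derivable_cst.
- by apply: derivableM; [exact: derivable_coord | exact: IH].
- exact: derivableD (IHS _ _ _) (IHT _ _ _).
- by apply: derivableM; [exact: derivable_cst | exact: IH].
Qed.

Lemma xi_derivable_mulf (f : point -> R) S : xi_derivable S ->
  xi_derivable (fun x xi => f x * S x xi).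
Proof. by move=> hS x xi v; apply: derivableM; [exact: derivable_cst | exact: hS]. Qed.

Lemma xi_derivable_sum (I : Type) (r : seq I) (P : pred I) (F : I -> symb) :
  (forall i, P i -> xi_derivable (F i)) ->
  xi_derivable (fun x xi => \sum_(i <- r | P i) F i x xi).
Proof. by move=> hF x xi v; apply: derivable_big => i Pi; exact: hF. Qed.

Section DerivativeRules.
Context {k : 'I_N} {x xi : point}.

Lemma dx_add S T : x_derivable S -> x_derivable T ->
  dx k (fun x xi => S x xi + T x xi) x xi = dx k S x xi + dx k T x xi.
Proof. by move=> hS hT; exact: deriveD. Qed.

Lemma dx_mulf (f : point -> R) S : (forall x v, derivable f x v) -> x_derivable S ->
  dx k (fun x xi => f x * S x xi) x xi = f x * dx k S x xi + 'D_(ev k) f x * S x xi.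
Proof. by move=> hf hS; rewrite /dx (derive_mul (hf _ _) (hS _ _ _)) [S x xi * _]mulrC. Qed.

Lemma dx_mulxi (j : 'I_N) S : x_derivable S ->
  dx k (fun x xi => xi 0 j * S x xi) x xi = xi 0 j * dx k S x xi.
Proof.
by move=> hS; rewrite /dx (derive_mul (derivable_cst _ _ _) (hS _ _ _)) derive_cst mulr0 addr0.
Qed.

Lemma dx_sum (I : Type) (r : seq I) (P : pred I) (F : I -> symb) :
  (forall i, P i -> x_derivable (F i)) ->
  dx k (fun x xi => \sum_(i <- r | P i) F i x xi) x xi = \sum_(i <- r | P i) dx k (F i) x xi.
Proof. by move=> hF; rewrite /dx derive_big // => i Pi; exact: hF. Qed.

Lemma dxi_add S T : xi_derivable S -> xi_derivable T ->
  dxi k (fun x xi => S x xi + T x xi) x xi = dxi k S x xi + dxi k T x xi.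
Proof. by move=> hS hT; exact: deriveD. Qed.

Lemma dxi_mulf (f : point -> R) S : xi_derivable S ->
  dxi k (fun x xi => f x * S x xi) x xi = f x * dxi k S x xi.
Proof.
by move=> hS; rewrite /dxi (derive_mul (derivable_cst _ _ _) (hS _ _ _)) derive_cst mulr0 addr0.
Qed.

Lemma dxi_mulxi (j : 'I_N) S : xi_derivable S ->
  dxi k (fun x xi => xi 0 j * S x xi) x xi = xi 0 j * dxi k S x xi + ev k 0 j * S x xi.
Proof.
by move=> hS; rewrite /dxi (derive_mul derivable_coord (hS _ _ _)) derive_coord [S x xi * _]mulrC.
Qed.

Lemma dxi_mul S T : xi_derivable S -> xi_derivable T ->
  dxi k (fun x xi => S x xi * T x xi) x xi = S x xi * dxi k T x xi + T x xi * dxi k S x xi.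
Proof. by move=> hS hT; exact: derive_mul. Qed.

Lemma dxi_sum (I : Type) (r : seq I) (P : pred I) (F : I -> symb) :
  (forall i, P i -> xi_derivable (F i)) ->
  dxi k (fun x xi => \sum_(i <- r | P i) F i x xi) x xi = \sum_(i <- r | P i) dxi k (F i) x xi.
Proof. by move=> hF; rewrite /dxi derive_big // => i Pi; exact: hF. Qed.

Lemma dx_coeff (f : point -> R) : dx k (fun x _ => f x) x xi = 'D_(ev k) f x.
Proof. by []. Qed.

Lemma dxiE S : dxi k S x xi = 'D_(ev k) (S x) xi.
Proof. by []. Qed.

Lemma dxi_coeff (f : point -> R) : dxi k (fun x _ => f x) x xi = 0.
Proof. exact: derive_cst. Qed.

End DerivativeRules.

(* Otherwise every failed match against a [dx]/[dxi] pattern unfolds the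
   derivatives into limits, which makes rewriting very slow. *)
Local Opaque dx dxi.

Lemma homog_dx m k S : homog m S -> homog m (dx k S).
Proof.
elim=> {m S} [f cf|m j S hS IH|m S T hS IHS hT IHT|m f S cf hS IH].
- by apply: homog_ext (homog_coeff (coeff_derive _ cf)) _ => x xi; rewrite dx_coeff.
- apply: homog_ext (homog_mulxi j IH) _ => x xi.
  by rewrite dx_mulxi //; exact: homog_x_derivable hS.
- apply: homog_ext (homog_add IHS IHT) _ => x xi.
  by rewrite dx_add //; [exact: homog_x_derivable hS | exact: homog_x_derivable hT].
- apply: homog_ext (homog_add (homog_mulf cf IH) (homog_mulf (coeff_derive _ cf) hS)) _ => x xi.
  by rewrite dx_mulf //; [move=> *; exact: coeff_derivable | exact: homog_x_derivable hS].
Qed.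

Lemma homog_dxi_and_dxi0 m k S : homog m S ->
  homog m.-1 (dxi k S) /\ (m = 0%N -> forall x xi, dxi k S x xi = 0).
Proof.
elim=> {m S} [f cf|m j S hS [IH IH0]|m S T hS [IHS IHS0] hT [IHT IHT0]|m f S cf hS [IH IH0]].
- split=> [|_ x xi]; last exact: dxi_coeff.
  by apply: homog_ext (homog0 0) _ => x xi; rewrite dxi_coeff.
- have dS := homog_xi_derivable hS; split=> //.
  case: m hS IH IH0 dS => [|m] hS IH IH0 dS.
    apply: homog_ext (homogZ (ev k 0 j) hS) _ => x xi.
    by rewrite dxi_mulxi // IH0 // mulr0 add0r.
  by apply: homog_ext (homog_add (homog_mulxi j IH) (homogZ (ev k 0 j) hS)) _ => x xi;
    rewrite dxi_mulxi.
- have dS := homog_xi_derivable hS; have dT := homog_xi_derivable hT.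
  split=> [|m0 x xi]; last by rewrite dxi_add // IHS0 // IHT0 // addr0.
  by apply: homog_ext (homog_add IHS IHT) _ => x xi; rewrite dxi_add.
- have dS := homog_xi_derivable hS.
  split=> [|m0 x xi]; last by rewrite dxi_mulf // IH0 // mulr0.
  by apply: homog_ext (homog_mulf cf IH) _ => x xi; rewrite dxi_mulf.
Qed.

Lemma homog_dxi m k S : homog m S -> homog m.-1 (dxi k S).
Proof. by move=> /(homog_dxi_and_dxi0 k)[]. Qed.

Lemma dxi_homog0 k S : homog 0 S -> forall x xi, dxi k S x xi = 0.
Proof. by move=> /(homog_dxi_and_dxi0 k)[_]; apply. Qed.

Lemma dx_dxiC m S : homog m S -> forall i j x xi, dx i (dxi j S) x xi = dxi j (dx i S) x xi.
Proof.
elim=> {m S} [f cf|m l S hS IH|m S T hS IHS hT IHT|m f S cf hS IH] i j x xi.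
- have -> : dxi j (fun x _ => f x) = (fun x _ => 0).
    by apply: symb_ext => ??; exact: dxi_coeff.
  have -> : dx i (fun x _ => f x) = (fun x _ => 'D_(ev i) f x).
    by apply: symb_ext => ??; exact: dx_coeff.
  by rewrite dx_coeff dxi_coeff derive_cst.
- have dS := homog_x_derivable hS; have dSj := homog_x_derivable (homog_dxi j hS).
  have dS' := homog_xi_derivable hS; have dSi := homog_xi_derivable (homog_dx i hS).
  have -> : dxi j (fun x xi => xi 0 l * S x xi) =
      (fun x xi => xi 0 l * dxi j S x xi + ev j 0 l * S x xi).
    by apply: symb_ext => ??; rewrite dxi_mulxi.
  have -> : dx i (fun x xi => xi 0 l * S x xi) = (fun x xi => xi 0 l * dx i S x xi).
    by apply: symb_ext => ??; rewrite dx_mulxi.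
  have dlS : x_derivable (fun x xi => xi 0 l * dxi j S x xi).
    by move=> ???; apply: derivableM; [exact: derivable_cst | exact: dSj].
  have dcS : x_derivable (fun x xi => ev j 0 l * S x xi).
    by move=> ???; apply: derivableM; [exact: derivable_cst | exact: dS].
  rewrite dx_add // dx_mulxi // dxi_mulxi // IH dx_mulf ?derive_cst ?mul0r ?addr0 //.
- have dS := homog_x_derivable hS; have dT := homog_x_derivable hT.
  have dS' := homog_xi_derivable hS; have dT' := homog_xi_derivable hT.
  have -> : dxi j (fun x xi => S x xi + T x xi) = (fun x xi => dxi j S x xi + dxi j T x xi).
    by apply: symb_ext => ??; rewrite dxi_add.
  have -> : dx i (fun x xi => S x xi + T x xi) = (fun x xi => dx i S x xi + dx i T x xi).
    by apply: symb_ext => ??; rewrite dx_add.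
  rewrite dx_add; [|exact: homog_x_derivable (homog_dxi j hS)|exact: homog_x_derivable (homog_dxi j hT)].
  rewrite dxi_add; [|exact: homog_xi_derivable (homog_dx i hS)|exact: homog_xi_derivable (homog_dx i hT)].
  by rewrite IHS IHT.
- have df x' v : derivable f x' v by exact: coeff_derivable cf.
  have dS := homog_x_derivable hS; have dS' := homog_xi_derivable hS.
  have dSj := homog_x_derivable (homog_dxi j hS); have dSi := homog_xi_derivable (homog_dx i hS).
  have dfSi : xi_derivable (fun x xi => f x * dx i S x xi) := xi_derivable_mulf dSi.
  have dDfS : xi_derivable (fun x xi => 'D_(ev i) f x * S x xi) := xi_derivable_mulf dS'.
  have -> : dxi j (fun x xi => f x * S x xi) = (fun x xi => f x * dxi j S x xi).
    by apply: symb_ext => ??; rewrite dxi_mulf.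
  have -> : dx i (fun x xi => f x * S x xi) =
      (fun x xi => f x * dx i S x xi + 'D_(ev i) f x * S x xi).
    by apply: symb_ext => ??; rewrite dx_mulf.
  rewrite (dx_mulf df dSj) (dxi_add dfSi dDfS).
  by rewrite (dxi_mulf f dSi) (dxi_mulf _ dS') IH.
Qed.

Lemma euler_homog m S : homog m S -> forall x xi : point,
  \sum_(j < N) xi 0 j * dxi j S x xi = m%:R * S x xi.
Proof.
elim=> {m S} [f cf|m l S hS IH|m S T hS IHS hT IHT|m f S cf hS IH] x xi.
- by rewrite mul0r big1 // => j _; rewrite dxi_coeff mulr0.
- have dS := homog_xi_derivable hS.
  transitivity (xi 0 l * \sum_(j < N) xi 0 j * dxi j S x xi
                + (\sum_(j < N) xi 0 j * ev j 0 l) * S x xi).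
    rewrite mulr_sumr mulr_suml -big_split /=.
    by apply: eq_bigr => j _; rewrite (dxi_mulxi _ dS); ring.
  by rewrite IH (sum_evec (fun j => xi 0 j)) -natr1; ring.
- have dS := homog_xi_derivable hS; have dT := homog_xi_derivable hT.
  under eq_bigr do rewrite (dxi_add dS dT) mulrDr.
  by rewrite big_split /= IHS IHT mulrDr.
- have dS := homog_xi_derivable hS.
  under eq_bigr do rewrite (dxi_mulf _ dS) mulrCA.
  by rewrite -mulr_sumr IH mulrCA.
Qed.

Lemma x_derivable_mulf (f : point -> R) S : (forall x v, derivable f x v) ->
  x_derivable S -> x_derivable (fun x xi => f x * S x xi).
Proof. by move=> hf hS x xi v; apply: derivableM; [exact: hf | exact: hS]. Qed.

Lemma xi_derivable_mul S T : xi_derivable S -> xi_derivable T ->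
  xi_derivable (fun x xi => S x xi * T x xi).
Proof. by move=> hS hT x xi v; apply: derivableM; [exact: hS | exact: hT]. Qed.

Lemma commutator_first_order (a : 'I_N -> point -> R) (b : 'I_N -> symb) T x xi :
  (forall j x v, derivable (a j) x v) -> (forall k, xi_derivable (b k)) ->
  (forall k, xi_derivable (dx k T)) -> (forall j, x_derivable (dxi j T)) ->
  (forall k j x xi, dx k (dxi j T) x xi = dxi j (dx k T) x xi) ->
  \sum_(j < N) a j x * dxi j (fun x xi => \sum_(k < N) b k x xi * dx k T x xi) x xi
  - \sum_(k < N) b k x xi * dx k (fun x xi => \sum_(j < N) a j x * dxi j T x xi) x xi
  = \sum_(k < N) (\sum_(j < N) a j x * dxi j (b k) x xi) * dx k T x xi
    - \sum_(j < N) (\sum_(k < N) b k x xi * 'D_(ev k) (a j) x) * dxi j T x xi.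
Proof.
move=> da db dxT dxiT dxC.
have dPQ j : dxi j (fun x xi => \sum_(k < N) b k x xi * dx k T x xi) x xi =
    \sum_(k < N) (b k x xi * dx k (dxi j T) x xi + dx k T x xi * dxi j (b k) x xi).
  rewrite dxi_sum => [|k _]; last exact: xi_derivable_mul (db k) (dxT k).
  by apply: eq_bigr => k _; rewrite (dxi_mul (db k) (dxT k)) dxC.
have dQP k : dx k (fun x xi => \sum_(j < N) a j x * dxi j T x xi) x xi =
    \sum_(j < N) (a j x * dx k (dxi j T) x xi + 'D_(ev k) (a j) x * dxi j T x xi).
  rewrite dx_sum => [|j _]; last exact: x_derivable_mulf (da j) (dxiT j).
  by apply: eq_bigr => j _; rewrite (dx_mulf (da j) (dxiT j)).
transitivity (\sum_(j < N) \sum_(k < N)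
    (a j x * (b k x xi * dx k (dxi j T) x xi + dx k T x xi * dxi j (b k) x xi))
  - \sum_(j < N) \sum_(k < N)
    (b k x xi * (a j x * dx k (dxi j T) x xi + 'D_(ev k) (a j) x * dxi j T x xi))).
  congr (_ - _); first by apply: eq_bigr => j _; rewrite dPQ mulr_sumr.
  by rewrite [RHS]exchange_big; apply: eq_bigr => k _; rewrite dQP mulr_sumr.
transitivity (\sum_(j < N) \sum_(k < N) a j x * dxi j (b k) x xi * dx k T x xi
  - \sum_(j < N) \sum_(k < N) b k x xi * 'D_(ev k) (a j) x * dxi j T x xi).
  rewrite -!sumrB; apply: eq_bigr => j _; rewrite -!sumrB.
  by apply: eq_bigr => k _; ring.
congr (_ - _); last by apply: eq_bigr => j _; rewrite mulr_suml.
by rewrite exchange_big; apply: eq_bigr => k _; rewrite mulr_suml.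
Qed.

Local Notation q := (@qidx n).
Local Notation p := (@pidx n).
Local Notation t := (tidx n).

Lemma sum_qpt (F : 'I_N -> R) :
  \sum_(j < N) F j = \sum_(i < n) F (q i) + \sum_(i < n) F (p i) + F t.
Proof. by rewrite big_split_ord big_split_ord big_ord1. Qed.

Lemma ord_qptP (k : 'I_N) : (exists i, k = q i) \/ (exists i, k = p i) \/ k = t.
Proof.
rewrite -(splitK k); case: (fintype.split k) => [j|j] /=.
  rewrite -(splitK j); case: (fintype.split j) => [i|i] /=.
    by left; exists i.
  by right; left; exists i.
by right; right; rewrite /tidx (fintype.ord1 j).
Qed.

Definition ialpha_coef (j : 'I_N) (x : point) : R :=
  match fintype.split j with
  | inl j' => match fintype.split j' with
              | inl i => 2^-1 * x 0 (p i)
              | inr i => - (2^-1 * x 0 (q i)) end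
  | inr _ => - 2^-1 end.

Lemma ialpha_coef_q i : ialpha_coef (q i) = fun x => 2^-1 * x 0 (p i).
Proof. by rewrite /ialpha_coef /qidx (unsplitK (inl _)) (unsplitK (inl _)). Qed.

Lemma ialpha_coef_p i : ialpha_coef (p i) = fun x => - (2^-1 * x 0 (q i)).
Proof. by rewrite /ialpha_coef /pidx (unsplitK (inl _)) (unsplitK (inr _)). Qed.

Lemma ialpha_coef_t : ialpha_coef t = fun _ => - 2^-1.
Proof. by rewrite /ialpha_coef /tidx (unsplitK (inr _)). Qed.

Definition Dop_coef (k : 'I_N) : symb := fun x xi =>
  match fintype.split k with
  | inl k' => match fintype.split k' with
              | inl i => - xi 0 (p i) + xi 0 t * x 0 (q i)
              | inr i => xi 0 (q i) + xi 0 t * x 0 (p i) end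
  | inr _ => - Esxi x xi end.

Lemma Dop_coef_q i : Dop_coef (q i) = fun x xi => - xi 0 (p i) + xi 0 t * x 0 (q i).
Proof. by rewrite /Dop_coef /qidx (unsplitK (inl _)) (unsplitK (inl _)). Qed.

Lemma Dop_coef_p i : Dop_coef (p i) = fun x xi => xi 0 (q i) + xi 0 t * x 0 (p i).
Proof. by rewrite /Dop_coef /pidx (unsplitK (inl _)) (unsplitK (inr _)). Qed.

Lemma Dop_coef_t : Dop_coef t = fun x xi => - Esxi x xi.
Proof. by rewrite /Dop_coef /tidx (unsplitK (inr _)). Qed.

Lemma ialphaE T x xi : ialpha T x xi = \sum_(j < N) ialpha_coef j x * dxi j T x xi.
Proof.
rewrite sum_qpt ialpha_coef_t.
under [X in _ = X + _ + _]eq_bigr do rewrite ialpha_coef_q.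
under [X in _ = _ + X + _]eq_bigr do rewrite ialpha_coef_p.
rewrite /ialpha sumrB !mulrBr !mulr_sumr -sumrN.
congr (_ + _ + _).
- by apply: eq_bigr => i _; rewrite mulrA.
- by apply: eq_bigr => i _; rewrite mulrA mulNr.
- by rewrite mulNr.
Qed.

Lemma DopE T x xi : Dop T x xi = \sum_(k < N) Dop_coef k x xi * dx k T x xi.
Proof.
rewrite sum_qpt Dop_coef_t.
under [X in _ = X + _ + _]eq_bigr do rewrite Dop_coef_q.
under [X in _ = _ + X + _]eq_bigr do rewrite Dop_coef_p.
rewrite /Dop /EsS /Esxi /= mulNr; congr (_ + _).
by rewrite mulr_sumr -!big_split /=; apply: eq_bigr => i _; ring.
Qed.

Lemma derivable_ialpha_coef j x v : derivable (ialpha_coef j) x v.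
Proof.
have [[i ->]|[[i ->]|->]] := ord_qptP j.
- by rewrite ialpha_coef_q; apply: derivableM; [exact: derivable_cst | exact: derivable_coord].
- rewrite ialpha_coef_p; apply: derivableN.
  by apply: derivableM; [exact: derivable_cst | exact: derivable_coord].
- by rewrite ialpha_coef_t; exact: derivable_cst.
Qed.

Lemma xi_derivable_Dop_coef k : xi_derivable (Dop_coef k).
Proof.
have dtx (x xi v : point) (l : 'I_N) : derivable (fun eta : point => eta 0 t * x 0 l) xi v.
  by apply: derivableM; [exact: derivable_coord | exact: derivable_cst].
move=> x xi v; have [[i ->]|[[i ->]|->]] := ord_qptP k.
- by rewrite Dop_coef_q; apply: derivableD; [apply: derivableN; exact: derivable_coord | exact: dtx].
- by rewrite Dop_coef_p; apply: derivableD; [exact: derivable_coord | exact: dtx].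
- rewrite Dop_coef_t /Esxi; apply: derivableN; apply: derivable_big => i _.
  by apply: derivableD; (apply: derivableM; [exact: derivable_cst | exact: derivable_coord]).
Qed.

Lemma derive_scale_coord (c : R) (l : 'I_N) (x v : point) :
  'D_v (fun y : point => c * y 0 l) x = c * v 0 l.
Proof.
by rewrite (derive_mul (derivable_cst _ _ _) derivable_coord) derive_coord derive_cst mulr0 addr0.
Qed.

Lemma dxi_Dop_coef_q i j x xi :
  dxi j (Dop_coef (q i)) x xi = - ev j 0 (p i) + ev j 0 t * x 0 (q i).
Proof.
rewrite Dop_coef_q dxiE /= deriveD; last 2 first.
- by apply: derivableN; exact: derivable_coord.
- by apply: derivableM; [exact: derivable_coord | exact: derivable_cst].
rewrite deriveN; last exact: derivable_coord.
rewrite derive_mul; [|exact: derivable_coord|exact: derivable_cst].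
by rewrite !derive_coord derive_cst; ring.
Qed.

Lemma dxi_Dop_coef_p i j x xi :
  dxi j (Dop_coef (p i)) x xi = ev j 0 (q i) + ev j 0 t * x 0 (p i).
Proof.
rewrite Dop_coef_p dxiE /= deriveD; [|exact: derivable_coord|].
  rewrite derive_mul; [|exact: derivable_coord|exact: derivable_cst].
  by rewrite !derive_coord derive_cst; ring.
by apply: derivableM; [exact: derivable_coord | exact: derivable_cst].
Qed.

Lemma dxi_Dop_coef_t j x xi :
  dxi j (Dop_coef t) x xi = - \sum_(i < n) (x 0 (p i) * ev j 0 (p i) + x 0 (q i) * ev j 0 (q i)).
Proof.
have dE i (eta : point) : derivable
    (fun y : point => x 0 (p i) * y 0 (p i) + x 0 (q i) * y 0 (q i)) eta (ev j).
  by apply: derivableD; (apply: derivableM; [exact: derivable_cst | exact: derivable_coord]).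
rewrite Dop_coef_t dxiE /Esxi /= deriveN; last by apply: derivable_big => i _; exact: dE.
rewrite derive_big => [|i _]; last exact: dE.
congr (- _); apply: eq_bigr => i _.
rewrite deriveD; last 2 first.
- by apply: derivableM; [exact: derivable_cst | exact: derivable_coord].
- by apply: derivableM; [exact: derivable_cst | exact: derivable_coord].
by rewrite !derive_scale_coord.
Qed.

Lemma ialpha_Dop_coef k x xi : ialpha (Dop_coef k) x xi = 0.
Proof.
rewrite ialphaE; have [[i ->]|[[i ->]|->]] := ord_qptP k.
- under eq_bigr do rewrite dxi_Dop_coef_q.
  transitivity (- (\sum_(j < N) ialpha_coef j x * ev j 0 (p i))
                + (\sum_(j < N) ialpha_coef j x * ev j 0 t) * x 0 (q i)).
    by rewrite mulr_suml -sumrN -big_split; apply: eq_bigr => j _ /=; ring.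
  by rewrite !(sum_evec (fun j => ialpha_coef j x)) ialpha_coef_p ialpha_coef_t /=; ring.
- under eq_bigr do rewrite dxi_Dop_coef_p.
  transitivity ((\sum_(j < N) ialpha_coef j x * ev j 0 (q i))
                + (\sum_(j < N) ialpha_coef j x * ev j 0 t) * x 0 (p i)).
    by rewrite mulr_suml -big_split; apply: eq_bigr => j _ /=; ring.
  by rewrite !(sum_evec (fun j => ialpha_coef j x)) ialpha_coef_q ialpha_coef_t /=; ring.
- under eq_bigr do rewrite dxi_Dop_coef_t mulrN mulr_sumr.
  rewrite sumrN exchange_big /= big1 ?oppr0 // => i _.
  transitivity (x 0 (p i) * (\sum_(j < N) ialpha_coef j x * ev j 0 (p i))
              + x 0 (q i) * (\sum_(j < N) ialpha_coef j x * ev j 0 (q i))).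
    by rewrite !mulr_sumr -big_split; apply: eq_bigr => j _ /=; ring.
  by rewrite !(sum_evec (fun j => ialpha_coef j x)) ialpha_coef_p ialpha_coef_q /=; ring.
Qed.

Lemma Dop_ialpha_coef_q i x xi :
  \sum_(k < N) Dop_coef k x xi * 'D_(ev k) (ialpha_coef (q i)) x = 2^-1 * Dop_coef (p i) x xi.
Proof.
rewrite ialpha_coef_q; under eq_bigr do rewrite derive_scale_coord mulrCA.
by rewrite -mulr_sumr (sum_evec (fun k => Dop_coef k x xi)).
Qed.

Lemma Dop_ialpha_coef_p i x xi :
  \sum_(k < N) Dop_coef k x xi * 'D_(ev k) (ialpha_coef (p i)) x = - (2^-1 * Dop_coef (q i) x xi).
Proof.
rewrite ialpha_coef_p.
under eq_bigr => k do rewrite (deriveN (derivableM (derivable_cst _ _ _) derivable_coord)).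
under eq_bigr do rewrite derive_scale_coord mulrN mulrCA.
by rewrite sumrN -mulr_sumr (sum_evec (fun k => Dop_coef k x xi)).
Qed.

Lemma Dop_ialpha_coef_t x xi :
  \sum_(k < N) Dop_coef k x xi * 'D_(ev k) (ialpha_coef t) x = 0.
Proof. by rewrite ialpha_coef_t big1 // => k _; rewrite derive_cst mulr0. Qed.

Lemma ialpha_Dop m S : homog m S -> forall x xi,
  ialpha (Dop S) x xi
  = Dop (ialpha S) x xi - 2^-1 * m%:R * S x xi - xi 0 t * ialpha S x xi.
Proof.
move=> hS x xi.
have := commutator_first_order x xi derivable_ialpha_coef xi_derivable_Dop_coef
  (fun k => homog_xi_derivable (homog_dx k hS)) (fun j => homog_x_derivable (homog_dxi j hS))
  (dx_dxiC hS).
have -> : (fun x xi => \sum_(k < N) Dop_coef k x xi * dx k S x xi) = Dop S.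
  by apply: symb_ext => ??; rewrite DopE.
have -> : (fun x xi => \sum_(j < N) ialpha_coef j x * dxi j S x xi) = ialpha S.
  by apply: symb_ext => ??; rewrite ialphaE.
rewrite -ialphaE -DopE big1 => [|k _]; last by rewrite -ialphaE ialpha_Dop_coef mul0r.
rewrite sum_qpt Dop_ialpha_coef_t mul0r addr0 sub0r => /eqP; rewrite subr_eq => /eqP ->.
have := euler_homog hS x xi; rewrite sum_qpt => Eu.
have -> : \sum_(i < n) (\sum_(k < N) Dop_coef k x xi * 'D_(ev k) (ialpha_coef (q i)) x)
            * dxi (q i) S x xi
        + \sum_(i < n) (\sum_(k < N) Dop_coef k x xi * 'D_(ev k) (ialpha_coef (p i)) x)
            * dxi (p i) S x xi
    = 2^-1 * (\sum_(i < n) xi 0 (q i) * dxi (q i) S x xi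
              + \sum_(i < n) xi 0 (p i) * dxi (p i) S x xi)
      + 2^-1 * xi 0 t * \sum_(i < n) (x 0 (p i) * dxi (q i) S x xi
                                      - x 0 (q i) * dxi (p i) S x xi).
  rewrite -big_split mulrDr !mulr_sumr -!big_split /=; apply: eq_bigr => i _.
  by rewrite Dop_ialpha_coef_q Dop_ialpha_coef_p Dop_coef_p Dop_coef_q /=; ring.
by rewrite /ialpha -[2^-1 * m%:R * S x xi]mulrA -Eu; ring.
Qed.

Lemma ialpha_add S T x xi : xi_derivable S -> xi_derivable T ->
  ialpha (fun x xi => S x xi + T x xi) x xi = ialpha S x xi + ialpha T x xi.
Proof.
move=> dS dT; rewrite !ialphaE -big_split /=; apply: eq_bigr => j _.
by rewrite (dxi_add dS dT) mulrDr.
Qed.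

Lemma ialpha_mulf (c : R) S x xi : xi_derivable S ->
  ialpha (fun x xi => c * S x xi) x xi = c * ialpha S x xi.
Proof.
move=> dS; rewrite !ialphaE mulr_sumr; apply: eq_bigr => j _.
by rewrite (dxi_mulf (fun _ => c) dS) mulrCA.
Qed.

Lemma ialpha_sum (I : Type) (r : seq I) (P : pred I) (F : I -> symb) x xi :
  (forall i, P i -> xi_derivable (F i)) ->
  ialpha (fun x xi => \sum_(i <- r | P i) F i x xi) x xi
  = \sum_(i <- r | P i) ialpha (F i) x xi.
Proof.
move=> dF; rewrite ialphaE.
transitivity (\sum_(j < N) \sum_(i <- r | P i) ialpha_coef j x * dxi j (F i) x xi).
  by apply: eq_bigr => j _; rewrite (dxi_sum _ dF) mulr_sumr.
by rewrite exchange_big /=; apply: eq_bigr => i _; rewrite ialphaE.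
Qed.

Lemma Dop_add S T x xi : x_derivable S -> x_derivable T ->
  Dop (fun x xi => S x xi + T x xi) x xi = Dop S x xi + Dop T x xi.
Proof.
move=> dS dT; rewrite !DopE -big_split /=; apply: eq_bigr => j _.
by rewrite (dx_add dS dT) mulrDr.
Qed.

Lemma Dop_mulf (c : R) S x xi : x_derivable S ->
  Dop (fun x xi => c * S x xi) x xi = c * Dop S x xi.
Proof.
move=> dS; rewrite !DopE mulr_sumr; apply: eq_bigr => j _.
rewrite (@dx_mulf _ _ _ (fun _ => c) _ (fun _ _ => derivable_cst _ _ _) dS) derive_cst.
by rewrite mul0r addr0 mulrCA.
Qed.

Lemma Dop0 x xi : Dop (fun _ _ : point => 0) x xi = 0.
Proof. by rewrite DopE big1 // => j _; rewrite dx_coeff derive_cst mulr0. Qed.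

Lemma Xop_add delta m S T x xi : x_derivable S -> x_derivable T ->
  Xop delta m (fun x xi => S x xi + T x xi) x xi = Xop delta m S x xi + Xop delta m T x xi.
Proof. by move=> dS dT; rewrite /Xop (Dop_add _ _ dS dT); ring. Qed.

Lemma Xop_mulf delta m (c : R) S x xi : x_derivable S ->
  Xop delta m (fun x xi => c * S x xi) x xi = c * Xop delta m S x xi.
Proof. by move=> dS; rewrite /Xop (Dop_mulf _ _ _ dS); ring. Qed.

Lemma Xop0 delta m : Xop delta m (fun _ _ : point => 0) = (fun _ _ => 0).
Proof. by apply: symb_ext => x xi; rewrite /Xop Dop0; ring. Qed.

Lemma Xiter0 delta l m : Xiter delta l m (fun _ _ : point => 0) = (fun _ _ => 0).
Proof. by elim: l => [|l IH] //=; rewrite IH Xop0. Qed.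

Lemma homog_ialpha m S : homog m S -> homog m.-1 (ialpha S).
Proof.
move=> hS; apply: homogZ; apply: homogB; last exact: homog_dxi.
by apply: homog_sum => i _; apply: homogB; apply: homog_mulx; exact: homog_dxi.
Qed.

Lemma ialpha_homog0 S : homog 0 S -> ialpha S = (fun _ _ => 0).
Proof.
move=> hS; apply: symb_ext => x xi; rewrite ialphaE big1 // => j _.
by rewrite (dxi_homog0 j hS) mulr0.
Qed.

Lemma homog_iter_ialpha d S j : homog d S -> homog (d - j) (iter j (@ialpha R n) S).
Proof.
move=> hS; elim: j => [|j IH] /=; first by rewrite subn0.
by rewrite subnS; exact: homog_ialpha.
Qed.

Lemma homog_Dop m S : homog m S -> homog m.+1 (Dop S).
Proof.
move=> hS.
have hA : homog m.+1 (fun x xi => \sum_(i < n)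
    (xi 0 (q i) * dx (p i) S x xi - xi 0 (p i) * dx (q i) S x xi)).
  by apply: homog_sum => i _; apply: homogB; apply: homog_mulxi; exact: homog_dx.
have hB : homog m.+1 (fun x xi => xi 0 t * \sum_(i < n)
    (x 0 (p i) * dx (p i) S x xi + x 0 (q i) * dx (q i) S x xi)).
  by apply: homog_mulxi; apply: homog_sum => i _; apply: homog_add; apply: homog_mulx;
    exact: homog_dx.
have hC : homog m.+1 (fun x xi => \sum_(i < n)
    (xi 0 (p i) * (x 0 (p i) * dx t S x xi) + xi 0 (q i) * (x 0 (q i) * dx t S x xi))).
  by apply: homog_sum => i _; apply: homog_add; apply: homog_mulxi; apply: homog_mulx;
    exact: homog_dx.
apply: homog_ext (homogB (homog_add hA hB) hC) _ => x xi.
by rewrite /Dop /EsS /Esxi mulr_suml; congr (_ - _); apply: eq_bigr => i _; ring.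
Qed.

Lemma homog_Xop delta m' m S : homog m S -> homog m.+1 (Xop delta m' S).
Proof.
move=> hS; apply: homog_add; first exact: homog_Dop.
by apply: homog_ext (homogZ _ (homog_mulxi t hS)) _ => x xi; rewrite mulrA.
Qed.

Lemma homog_Xiter delta d m S l : homog d S -> homog (d + l) (Xiter delta l m S).
Proof.
move=> hS; elim: l => [|l IH] /=; first by rewrite addn0.
by rewrite addnS; exact: homog_Xop.
Qed.

Lemma ialpha_mulxit (c : R) S x xi : xi_derivable S ->
  ialpha (fun x xi => c * xi 0 t * S x xi) x xi
  = c * (xi 0 t * ialpha S x xi - 2^-1 * S x xi).
Proof.
move=> dS; have dtS : xi_derivable (fun x xi => xi 0 t * S x xi).
  by move=> ???; apply: derivableM; [exact: derivable_coord | exact: dS].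
have -> : (fun x xi : point => c * xi 0 t * S x xi) = (fun x xi => c * (xi 0 t * S x xi)).
  by apply: symb_ext => ??; rewrite mulrA.
rewrite (ialpha_mulf _ _ _ dtS) ialphaE.
transitivity (c * (xi 0 t * \sum_(j < N) ialpha_coef j x * dxi j S x xi
                   + (\sum_(j < N) ialpha_coef j x * ev j 0 t) * S x xi)).
  congr (_ * _); rewrite mulr_sumr mulr_suml -big_split /=; apply: eq_bigr => j _.
  by rewrite (dxi_mulxi _ dS); ring.
by rewrite sum_evec ialpha_coef_t -ialphaE; ring.
Qed.

Lemma ialpha_Xop delta m S : homog m S -> forall x xi,
  ialpha (Xop delta m S) x xi
  = Xop delta m.-1 (ialpha S) x xi - ((n + 1)%:R * delta + m%:R) * S x xi.
Proof.
move=> hS x xi; have dS := homog_xi_derivable hS.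
have dtS : xi_derivable (fun x xi => (2 * (n + 1)%:R * delta + m%:R) * xi 0 t * S x xi).
  by move=> ???; apply: derivableM; [apply: derivableM; [exact: derivable_cst |
    exact: derivable_coord] | exact: dS].
rewrite /Xop (ialpha_add _ _ (homog_xi_derivable (homog_Dop hS)) dtS).
rewrite (ialpha_Dop hS) (ialpha_mulxit _ _ _ dS).
case: m hS {dS dtS} => [|m] hS; last by rewrite -[m.+1%:R]natr1 /=; field.
by rewrite (ialpha_homog0 hS) Dop0 /=; field.
Qed.

Lemma Xop_Xiter_ialpha delta d l S : homog d S ->
  Xop delta (d + l) (Xiter delta l.+1 d.-1 (ialpha S)) = Xiter delta l.+2 d.-1 (ialpha S).
Proof.
case: d => [|d] hS; last by rewrite /= addSn addnS.
by rewrite (ialpha_homog0 hS) !Xiter0 Xop0.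
Qed.

Lemma ialpha_Xiter delta d S l : homog d S -> forall x xi,
  ialpha (Xiter delta l.+1 d S) x xi
  = Xiter delta l.+1 d.-1 (ialpha S) x xi + rcoef n delta l.+1 d * Xiter delta l d S x xi.
Proof.
move=> hS; elim: l => [|l IH] x xi.
  by rewrite /= !addn0 (ialpha_Xop delta hS) /rcoef; field.
have hX := homog_Xiter delta d l.+1 hS.
rewrite -[Xiter delta l.+2 d S]/(Xop delta (d + l.+1) (Xiter delta l.+1 d S)).
rewrite (ialpha_Xop _ hX) addnS succnK.
have -> : ialpha (Xiter delta l.+1 d S) = fun x xi =>
    Xiter delta l.+1 d.-1 (ialpha S) x xi + rcoef n delta l.+1 d * Xiter delta l d S x xi.
  by apply: symb_ext; exact: IH.
have dX := homog_x_derivable (homog_Xiter delta d l hS).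
have dXi := homog_x_derivable (homog_Xiter delta d.-1 l.+1 (homog_ialpha hS)).
rewrite Xop_add; last 2 first.
- exact: dXi.
- by move=> ???; apply: derivableM; [exact: derivable_cst | exact: dX].
rewrite Xop_mulf; last exact: dX.
rewrite (Xop_Xiter_ialpha _ _ hS) -[Xop delta (d + l) (Xiter delta l d S)]/(Xiter delta l.+1 d S).
by rewrite /rcoef !natrD; field.
Qed.

Lemma rcoef_eq0 (delta : R) l m : (0 < l)%N ->
  (rcoef n delta l m == 0) = (delta == - ((2 * m + l - 1)%:R / (2 * (n + 1)%:R))).
Proof.
move=> l0; have c0 : (2 * (n + 1)%:R : R) != 0 by rewrite mulf_neq0 // pnatr_eq0 addn1.
have -> : ((2 * m + l - 1)%:R : R) = 2 * m%:R + l%:R - 1.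
  by rewrite natrB; [rewrite natrD natrM | lia].
rewrite /rcoef mulf_eq0 oppr_eq0 mulf_eq0 invr_eq0 !pnatr_eq0 (gtn_eqF l0) /=.
apply/eqP/eqP => [h|->]; last by field.
by rewrite -[delta](mulKf c0) mulrC -(subr0 (_ * delta)) -h; field.
Qed.

Lemma bcoef_succ (delta : R) k l : rcoef n delta l.+1 (k - l.+1) != 0 ->
  bcoef n delta k l.+1 * rcoef n delta l.+1 (k - l.+1) = - bcoef n delta k l.
Proof.
move=> r0; rewrite /bcoef big_nat_recr //= invfM invrN mulrN mulNr -mulrA.
by rewrite mulVf // mulr1.
Qed.

Lemma ialpha_s_op (delta : R) k S : (0 < k)%N ->
  (forall l, (0 < l <= k)%N -> rcoef n delta l (k - l) != 0) ->
  homog (k - 1) S -> ialpha (s_op delta k S) = S.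
Proof.
move=> k0 r0 hS; apply: symb_ext => x xi.
have hI j : homog (k - j.+1) (iter j (@ialpha R n) S).
  by rewrite -add1n subnDA; exact: homog_iter_ialpha.
pose F l : symb := fun x xi =>
  bcoef n delta k l * Xiter delta l (k - l) (iter l.-1 (@ialpha R n) S) x xi.
have dF l : xi_derivable (F l).
  case: l => [|l]; first exact: xi_derivable_mulf (homog_xi_derivable (homog_Xiter _ _ _ hS)).
  exact: xi_derivable_mulf (homog_xi_derivable (homog_Xiter _ _ _ (hI l))).
pose u l := if (l < k)%N then Xiter delta l (k - l.+1) (iter l (@ialpha R n) S) x xi else 0.
pose f l := bcoef n delta k l * u l.
have ialphaF l : (0 < l <= k)%N -> ialpha (F l) x xi = f l - f l.-1.
  case: l => [//|l] /= lk.
  rewrite ialpha_mulf; last exact: homog_xi_derivable (homog_Xiter _ _ _ (hI l)).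
  rewrite (ialpha_Xiter _ _ (hI l)) mulrDr mulrA (bcoef_succ (r0 l.+1 lk)).
  have -> : Xiter delta l (k - l.+1) (iter l (@ialpha R n) S) x xi = u l.
    by rewrite /u lk.
  have -> : Xiter delta l.+1 (k - l.+1).-1 (iter l.+1 (@ialpha R n) S) x xi = u l.+1.
    rewrite /u; case: ltnP => lk'; first by rewrite -subnS.
    have hI0 : homog 0 (iter l (@ialpha R n) S).
      by have := hI l; rewrite (_ : (k - l.+1 = 0)%N) //; lia.
    by rewrite iterS (ialpha_homog0 hI0) Xiter0.
  by rewrite /f mulNr.
have -> : s_op delta k S = fun x xi => -1 * \sum_(1 <= l < k.+1) F l x xi.
  by apply: symb_ext => ??; rewrite /s_op mulN1r.
rewrite ialpha_mulf; last exact: xi_derivable_sum.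
rewrite ialpha_sum => [|l _]; last exact: dF.
rewrite big_nat_cond (eq_bigr (fun l => f l - f l.-1)) => [|l /andP[lk _]]; last exact: ialphaF.
rewrite -big_nat_cond big_add1 telescope_sumr //= /f /u ltnn k0 mulr0 /bcoef big_geq //.
by rewrite invr1 mul1r /=; ring.
Qed.

End Symbols.

Theorem lemma5p1 (R : realType) (n : nat) (hn : (1 <= n)%N) (delta : R)
  (k : nat) (hk : (1 <= k)%N)
  (hdelta : forall p : nat, (k - 1 <= p <= 2 * k - 2)%N ->
              delta != - (p%:R / (2 * (n + 1)%:R)))
  (S : symb R n) :
  is_symbol (k - 1) S ->
  ialpha (s_op delta k S) = S.
Proof.
move=> /homog_of_symbol hS; apply: ialpha_s_op hk _ hS => l /andP[l0 lk].
rewrite rcoef_eq0 //; apply: hdelta; lia.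
Qed.
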